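(* Assume $\inf_{x\in X}\mu(B_x(1/2))>0$, and let $Z\subset X$ and $N:\mathbb{R}\to\mathbb{N}$ be such that $X=\bigcup_{z\in Z}B_z(1)$ and, for every $x\in X$ and $r\ge1$, the number of $z\in Z$ with $B_z(r)\cap B_x(r)\neq\emptyset$ is at most $N(r)$. Then for every controlled operator $T\in\mathscr{B}(X)$, $$\|T\|\le N(d(T)+1)^{1/2}\sup_{x\in X}\|\mathbf{1}_{B_x(1)}T\|.$$
   Context: $(X,d)$ is a non-compact proper metric space, $B_x(r)=\{y:d(x,y)\le r\}$, and $\mu$ is a Radon measure with support $X$ such that $\mu(B_x(r))>0$ and $\sup_x\mu(B_x(r))<\infty$ for all $r>0$. $\mathscr{B}(X)$ is the algebra of bounded operators on $L^2(X,\mu)$; $\mathbf{1}_A$ is multiplication by the characteristic function of measurable $A$. $T$ is controlled if there is $r>0$ such that $\mathbf{1}_FT\mathbf{1}_G=0$ for all closed $F,G$ with $d(F,G)>r$; $d(T)$ is the smallest such $r$. *)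

From HB Require Import structures.
From mathcomp Require Import all_boot all_order all_algebra.
From mathcomp Require Import all_classical all_reals all_analysis.
From mathcomp Require Import complex.

Set Implicit Arguments.
Unset Strict Implicit.
Unset Printing Implicit Defensive.

Import Order.TTheory GRing.Theory Num.Theory.
Local Open Scope classical_set_scope.
Local Open Scope ring_scope.

Section Defs.
Context (R : realType) (M : metricType R) (x0 : M).

(* The carrier of M, made pointed (needed to build the generated sigma-algebra). *)
Definition pM : Type := M.
HB.instance Definition _ := Choice.on pM.
HB.instance Definition _ := isPointed.Build pM x0.

Definition Borel : measurableType _ :=
  g_sigma_algebraType (@open M : set (set pM)).

Definition cball (x : M) (r : R) : set M := [set y | mdist x y <= r].

Definition proper_space : Prop := forall (x : M) (r : R), compact (cball x r).

(* d(F,G) > r, where d(F,G) = inf {d(x,y) : x in F, y in G} (= +oo if F or G is empty) *)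
Definition dist_gt (F G : set M) (r : R) : Prop :=
  exists s : R, r < s /\ forall x y, F x -> G y -> s <= mdist x y.

Context (mu : {measure set Borel -> \bar R}).

Definition radon : Prop :=
  [/\ (forall K : set M, compact K -> (mu K < +oo)%E),
      (forall A : set Borel, measurable A ->
         mu A = ereal_inf [set mu U | U in [set U : set M | open U /\ A `<=` U]]) &
      (forall U : set M, open U ->
         mu U = ereal_sup [set mu K | K in [set K : set M | compact K /\ K `<=` U]])].

Definition full_support : Prop :=
  forall U : set M, open U -> U !=set0 -> (0 < mu U)%E.

Definition sqnormC (z : R[i]) : R := complex.Re z ^+ 2 + complex.Im z ^+ 2.

Definition L2 (f : Borel -> R[i]) : Prop :=
  [/\ measurable_fun setT (fun x => complex.Re (f x)),
      measurable_fun setT (fun x => complex.Im (f x)) &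
      (\int[mu]_x (sqnormC (f x))%:E < +oo)%E].

Definition esqrt (e : \bar R) : \bar R :=
  match e with
  | r%:E => (Num.sqrt r)%:E
  | +oo%E => +oo%E
  | -oo%E => 0%E
  end.

Definition norm2 (f : Borel -> R[i]) : \bar R :=
  esqrt (\int[mu]_x (sqnormC (f x))%:E).

Definition ae_eq (f g : Borel -> R[i]) : Prop := {ae mu, forall x, f x = g x}.

Definition mul_ind (A : set M) (f : Borel -> R[i]) : Borel -> R[i] :=
  fun x => (\1_A x : R[i]) * f x.

(* A bounded operator on L^2(X,mu), represented by a map on representatives:
   it preserves L^2, is linear and compatible with a.e. equality on L^2, and bounded. *)
Definition bounded_op (T : (Borel -> R[i]) -> (Borel -> R[i])) : Prop :=
  [/\ (forall f, L2 f -> L2 (T f)),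
      (forall (a : R[i]) f g, L2 f -> L2 g ->
         ae_eq (T (fun x => a * f x + g x)) (fun x => a * T f x + T g x)),
      (forall f g, L2 f -> L2 g -> ae_eq f g -> ae_eq (T f) (T g)) &
      (exists C : R, forall f, L2 f -> (norm2 (T f) <= C%:E * norm2 f)%E)].

Definition opnorm (S : (Borel -> R[i]) -> (Borel -> R[i])) : \bar R :=
  ereal_sup [set norm2 (S f) | f in [set f | L2 f /\ (norm2 f <= 1)%E]].

Definition controlled_by (T : (Borel -> R[i]) -> (Borel -> R[i])) (r : R) : Prop :=
  forall F G : set M, closed F -> closed G -> dist_gt F G r ->
  forall f, L2 f -> ae_eq (mul_ind F (T (mul_ind G f))) (fun _ => 0).

Definition controlled (T : (Borel -> R[i]) -> (Borel -> R[i])) : Prop :=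
  exists r : R, 0 < r /\ controlled_by T r.

Definition prop_d (T : (Borel -> R[i]) -> (Borel -> R[i])) : R :=
  inf [set r : R | 0 < r /\ controlled_by T r].

End Defs.

From Pilot Require Import Defs.
From HB Require Import structures.
From mathcomp Require Import all_boot all_order all_algebra.
From mathcomp Require Import all_classical all_reals all_analysis.
From mathcomp Require Import complex.
From mathcomp Require Import measurable_realfun.
From mathcomp Require Import ring lra.
Import Order.TTheory GRing.Theory Num.Theory.
Local Open Scope classical_set_scope.
Local Open Scope ring_scope.

Set Implicit Arguments.
Unset Strict Implicit.
Unset Printing Implicit Defensive.

(* Write d = d(T) and S = sup_x ||1_{B_x(1)} T||.  For every z, the operator
   1_{B_z(1)} T only sees f on the ball B_z(1 + d + e): the remaining part of f
   lives on a closed set at distance > d from B_z(1), which T does not connect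
   to B_z(1).  Hence ||1_{B_z(1)} T f||^2 <= S^2 ||1_{B_z(d+1)} f||^2 after
   letting e -> 0 (dominated convergence).  Since the balls B_z(1), z in Z,
   cover X, summing over the finitely many z near a large ball B_{x0}(n) gives
   ||1_{B_{x0}(n)} T f||^2 <= S^2 N(d+1) ||f||^2, because every point lies in at
   most N(d+1) of the balls B_z(d+1).  Monotone convergence in n concludes.
   Apart from the covering data Z and N, no hypothesis on X or mu is needed. *)

Section ComplexSqnorm.
Variable R : realType.
Implicit Types (a b : R[i]) (r : R).

Lemma complex_ReM a b :
  complex.Re (a * b) = complex.Re a * complex.Re b - complex.Im a * complex.Im b.
Proof. by case: a => ? ?; case: b. Qed.

Lemma complex_ImM a b :
  complex.Im (a * b) = complex.Re a * complex.Im b + complex.Im a * complex.Re b.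
Proof. by case: a => ? ?; case: b. Qed.

Lemma sqnormC_ge0 a : 0 <= sqnormC a.
Proof. by rewrite /sqnormC addr_ge0 // sqr_ge0. Qed.

Lemma sqnormCM a b : sqnormC (a * b) = sqnormC a * sqnormC b.
Proof. rewrite /sqnormC complex_ReM complex_ImM; ring. Qed.

Lemma sqnormC0 : sqnormC (0 : R[i]) = 0.
Proof. by rewrite /sqnormC /= expr0n /= addr0. Qed.

Lemma sqnormC_real r : sqnormC (Complex r 0) = r ^+ 2.
Proof. by rewrite /sqnormC /= expr0n /= addr0. Qed.

Lemma indic_complex (X : Type) (A : set X) x :
  (\1_A x : R[i]) = Complex (\1_A x : R) 0.
Proof. by rewrite !indicE; case: (x \in A). Qed.

End ComplexSqnorm.

Section MetricBalls.
Variables (R : realType) (M : metricType R).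

Lemma metric_ball_open (z : M) r : open (ball z r).
Proof.
rewrite openE => y; rewrite ballEmdist /= => hy.
apply: (@filterS _ _ _ (ball y (r - mdist z y))); last first.
  by apply: nbhsx_ballx; rewrite subr_gt0.
move=> w; rewrite !ballEmdist /= => hw.
have := metric_triangle z y w; lra.
Qed.

Lemma cball_closed (z : M) r : closed (cball z r).
Proof.
rewrite -[cball z r]setCK closedC openE => y hy.
have zy : r < mdist z y by rewrite ltNge; apply/negP.
apply: (@filterS _ _ _ (ball y (mdist z y - r))); last first.
  by apply: nbhsx_ballx; rewrite subr_gt0.
move=> w; rewrite !ballEmdist /= => hw; rewrite /cball /= => hzw.
have := metric_triangle z w y; rewrite (metric_sym w y); lra.
Qed.

Lemma near_ball_shrink (z x : M) (r : R) :
  \forall n \near \oo, (x \in (ball z (r + n.+1%:R^-1) : set M)) = (x \in cball z r).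
Proof.
have [zx|zx] := leP (mdist z x) r.
  apply: nearW => n; rewrite (@mem_set _ (cball z r)) // mem_set //.
  by rewrite ballEmdist /=; apply: (le_lt_trans zx); rewrite ltrDl invr_gt0.
have dp : 0 < mdist z x - r by rewrite subr_gt0.
apply: filterS (near_infty_natSinv_lt (PosNum dp)) => n /= hn.
rewrite (@memNset _ (cball z r)) ?memNset // ?ballEmdist /=.
  by move: hn; set u := (n.+1%:R : R)^-1; lra.
by rewrite /cball /=; lra.
Qed.

End MetricBalls.

Section SquareIntegrable.
Variables (R : realType) (M : metricType R) (x0 : M).
Variable mu : {measure set (Borel x0) -> \bar R}.
Local Notation B := (Borel x0).
Implicit Types (f g : B -> R[i]) (A : set M).

Definition sqmod f : B -> \bar R := fun x => (sqnormC (f x))%:E.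

Definition sqnorm2 f : \bar R := (\int[mu]_x sqmod f x)%E.

Definition measurable_ReIm f : Prop :=
  measurable_fun setT (fun x => complex.Re (f x)) /\
  measurable_fun setT (fun x => complex.Im (f x)).

Lemma open_measurable_Borel A : open A -> measurable (A : set B).
Proof. by move=> oA; apply: sub_sigma_algebra. Qed.

Lemma closed_measurable_Borel A : closed A -> measurable (A : set B).
Proof.
move=> cA; rewrite -[A]setCK; apply: measurableC; apply: open_measurable_Borel.
by rewrite -closedC setCK.
Qed.

Lemma ball_measurable (z : M) r : measurable (ball z r : set B).
Proof. by apply: open_measurable_Borel; apply: metric_ball_open. Qed.

Lemma cball_measurable (z : M) r : measurable (cball z r : set B).
Proof. by apply: closed_measurable_Borel; apply: cball_closed. Qed.

Lemma sqmod_ge0 f x : (0 <= sqmod f x)%E.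
Proof. by rewrite lee_fin sqnormC_ge0. Qed.

Lemma sqnorm2_ge0 f : (0 <= sqnorm2 f)%E.
Proof. by apply: integral_ge0 => x _; apply: sqmod_ge0. Qed.

Lemma measurable_sqmod f : measurable_ReIm f -> measurable_fun setT (sqmod f).
Proof.
case=> hRe hIm; apply/measurable_EFinP.
by apply: measurable_funD; apply: measurable_funX.
Qed.

Lemma L2_measurable_ReIm f : L2 mu f -> measurable_ReIm f.
Proof. by case. Qed.

Lemma L2_sqnorm2E f : L2 mu f -> sqnorm2 f = (fine (sqnorm2 f))%:E.
Proof. by case=> _ _ hfin; rewrite fineK // ge0_fin_numE // sqnorm2_ge0. Qed.

Lemma L2_norm2_le f (s : R) : L2 mu f -> 0 <= s ->
  (norm2 mu f <= s%:E)%E = (fine (sqnorm2 f) <= s ^+ 2).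
Proof.
move=> hf s0; rewrite (_ : norm2 mu f = esqrt (sqnorm2 f)) //.
rewrite [in LHS](L2_sqnorm2E hf) /= lee_fin -[RHS]ler_sqrt ?sqr_ge0 //.
by rewrite sqrtr_sqr ger0_norm.
Qed.

Lemma sqnormC_mul_ind A f x : sqnormC (mul_ind A f x) = (\1_A x : R) * sqnormC (f x).
Proof.
rewrite /mul_ind sqnormCM indic_complex sqnormC_real; congr (_ * _).
by rewrite indicE; case: (x \in A); rewrite ?expr1n ?expr0n.
Qed.

Lemma sqmod_mul_ind_le A f x : (sqmod (mul_ind A f) x <= sqmod f x)%E.
Proof.
rewrite /sqmod lee_fin sqnormC_mul_ind indicE.
by case: (x \in A); rewrite ?mul1r ?mul0r ?sqnormC_ge0.
Qed.

Lemma measurable_ReIm_mul_ind A f :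
  measurable (A : set B) -> measurable_ReIm f -> measurable_ReIm (mul_ind A f).
Proof.
move=> mA [hRe hIm]; split.
- rewrite (_ : (fun x => _) = (\1_A : B -> R) \* (fun x => complex.Re (f x))).
    by apply: measurable_funM => //; apply: measurable_indic.
  by apply/funext => x; rewrite /mul_ind indic_complex complex_ReM /= mul0r subr0.
- rewrite (_ : (fun x => _) = (\1_A : B -> R) \* (fun x => complex.Im (f x))).
    by apply: measurable_funM => //; apply: measurable_indic.
  by apply/funext => x; rewrite /mul_ind indic_complex complex_ImM /= mul0r addr0.
Qed.

Lemma measurable_ReIm_scale (a : R[i]) f :
  measurable_ReIm f -> measurable_ReIm (fun x => a * f x).
Proof.
move=> [hRe hIm]; split.
- rewrite (_ : (fun x => _) = (fun x => complex.Re a * complex.Re (f x) -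
     complex.Im a * complex.Im (f x))); last by apply/funext => x; rewrite complex_ReM.
  by apply: measurable_funB; apply: measurable_funM.
- rewrite (_ : (fun x => _) = (fun x => complex.Re a * complex.Im (f x) +
     complex.Im a * complex.Re (f x))); last by apply/funext => x; rewrite complex_ImM.
  by apply: measurable_funD; apply: measurable_funM.
Qed.

Lemma L2_mul_ind A f : measurable (A : set B) -> L2 mu f -> L2 mu (mul_ind A f).
Proof.
move=> mA hf; have hf' := L2_measurable_ReIm hf.
have [hRe hIm] := measurable_ReIm_mul_ind mA hf'.
have hfin : (sqnorm2 f < +oo)%E by case: hf.
split => //; apply: le_lt_trans hfin; apply: ge0_le_integral => //.
- by move=> x _; apply: sqmod_ge0.
- exact: measurable_sqmod.
- exact: measurable_sqmod.
- by move=> x _; apply: sqmod_mul_ind_le.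
Qed.

Lemma sqnorm2_scale (a : R[i]) f : measurable_ReIm f ->
  sqnorm2 (fun x => a * f x) = ((sqnormC a)%:E * sqnorm2 f)%E.
Proof.
move=> hf; rewrite /sqnorm2 -ge0_integralZl_EFin //.
- by apply: eq_integral => x _; rewrite /sqmod sqnormCM EFinM.
- by move=> x _; apply: sqmod_ge0.
- exact: measurable_sqmod.
- exact: sqnormC_ge0.
Qed.

Lemma fine_sqnorm2_scale (a : R[i]) f : L2 mu f ->
  fine (sqnorm2 (fun x => a * f x)) = sqnormC a * fine (sqnorm2 f).
Proof.
move=> hf; rewrite sqnorm2_scale; last exact: L2_measurable_ReIm.
by rewrite (L2_sqnorm2E hf) -EFinM.
Qed.

Lemma L2_0 : L2 mu (fun _ => 0).
Proof.
split; try exact: measurable_cst.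
rewrite (_ : (fun x => _) = (fun _ => 0%E)); last first.
  by apply/funext => x; rewrite sqnormC0.
by rewrite integral0 ltry.
Qed.

Lemma L2_scale (a : R[i]) f : L2 mu f -> L2 mu (fun x => a * f x).
Proof.
move=> hf; have [hRe hIm] := measurable_ReIm_scale a (L2_measurable_ReIm hf).
split => //; change (sqnorm2 (fun x => (a * f x)%R) < +oo)%E.
rewrite sqnorm2_scale; last exact: L2_measurable_ReIm.
by rewrite (L2_sqnorm2E hf) -EFinM ltry.
Qed.

Lemma sqnorm2_ae_eq f g : measurable_ReIm f -> measurable_ReIm g ->
  Defs.ae_eq mu f g -> sqnorm2 f = sqnorm2 g.
Proof.
move=> hf hg efg; apply: ae_eq_integral => //.
- exact: measurable_sqmod.
- exact: measurable_sqmod.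
by apply: filterS efg => x fgx _; rewrite /sqmod fgx.
Qed.

Lemma opnorm_ge0 (S : (B -> R[i]) -> (B -> R[i])) : (0 <= opnorm mu S)%E.
Proof.
have esqrt_ge0 (e : \bar R) : (0 <= esqrt e)%E.
  by case: e => [r||] //=; rewrite lee_fin sqrtr_ge0.
apply: (@le_trans _ _ (norm2 mu (S (fun _ => 0)))); first exact: esqrt_ge0.
apply: ereal_sup_ubound; exists (fun _ => 0) => //; split; first exact: L2_0.
rewrite /norm2 (_ : (fun x => _) = fun _ => 0%E); last first.
  by apply/funext => x; rewrite sqnormC0.
by rewrite integral0 /= sqrtr0.
Qed.

Lemma sqnorm2_mul_ind_ball_cvg (z : M) (r : R) f : L2 mu f ->
  (sqnorm2 (mul_ind (ball z (r + n.+1%:R^-1)) f) @[n --> \oo] -->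
   sqnorm2 (mul_ind (cball z r) f))%E.
Proof.
move=> hf; have hf' := L2_measurable_ReIm hf.
have := @dominated_convergence _ B R mu setT measurableT
  (fun n => sqmod (mul_ind (ball z (r + n.+1%:R^-1)) f))
  (sqmod (mul_ind (cball z r) f)) (sqmod f).
case.
- move=> n; apply: measurable_sqmod.
  exact: measurable_ReIm_mul_ind (ball_measurable _ _) hf'.
- apply: measurable_sqmod.
  exact: measurable_ReIm_mul_ind (cball_measurable _ _) hf'.
- apply: aeW => x _; apply: cvg_near_cst.
  by apply: filterS (near_ball_shrink z x r) => n e; rewrite /sqmod /mul_ind !indicE e.
- apply/integrableP; split; first exact: measurable_sqmod.
  rewrite (_ : (fun x => _) = sqmod f); first by case: hf.
  by apply/funext => x; rewrite gee0_abs // sqmod_ge0.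
- by apply: aeW => x n _; rewrite gee0_abs ?sqmod_ge0 // sqmod_mul_ind_le.
by move=> _ _; apply.
Qed.

Lemma sqnorm2_le_of_cball (C : \bar R) f : measurable_ReIm f ->
  (forall n : nat, sqnorm2 (mul_ind (cball x0 n%:R) f) <= C)%E ->
  (sqnorm2 f <= C)%E.
Proof.
move=> hf hC; pose fn n := sqmod (mul_ind (cball x0 n%:R) f).
have mfn n : measurable_fun setT (fn n).
  apply: measurable_sqmod.
  exact: measurable_ReIm_mul_ind (cball_measurable _ _) hf.
have fn_ge0 n x : setT x -> (0 <= fn n x)%E by move=> _; apply: sqmod_ge0.
have fn_nd x : setT x -> {homo fn^~ x : n m / (n <= m)%N >-> (n <= m)%E}.
  move=> _ n m nm; rewrite /fn /sqmod lee_fin !sqnormC_mul_ind !indicE.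
  case: (boolP (x \in cball x0 n%:R)) => [|_]; last first.
    by rewrite mul0r mulr_ge0 ?sqnormC_ge0 //; case: (_ \in _).
  rewrite inE /cball /= => hx; rewrite mem_set // /cball /=.
  by apply: (le_trans hx); rewrite ler_nat.
have cv := cvg_monotone_convergence (mu := mu) measurableT mfn fn_ge0 fn_nd.
have fn_lim : (fun x => limn (fn^~ x)) = sqmod f.
  apply/funext => x; apply: (cvg_lim (@ereal_hausdorff R)); apply: cvg_near_cst.
  apply: filterS (nbhs_infty_ge (Num.Def.trunc (mdist x0 x)).+1) => n hn.
  rewrite /fn /sqmod /mul_ind indicE mem_set ?mul1r // /cball /=.
  by apply/ltW/(lt_le_trans (truncnS_gt _)); rewrite ler_nat.
rewrite fn_lim in cv; change (\int[mu]_x sqmod f x <= C)%E.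
rewrite -(cvg_lim (@ereal_hausdorff R) cv).
apply: lime_le; first by apply/cvg_ex; eexists; exact: cv.
exact: nearW.
Qed.

End SquareIntegrable.

Section BoundedOperator.
Variables (R : realType) (M : metricType R) (x0 : M).
Variable mu : {measure set (Borel x0) -> \bar R}.
Local Notation B := (Borel x0).
Local Notation ae_eq := (Defs.ae_eq mu).
Variable T : (B -> R[i]) -> (B -> R[i]).
Hypothesis HT : bounded_op mu T.
Implicit Types (f g : B -> R[i]) (A : set M).

Lemma bounded_op_L2 f : L2 mu f -> L2 mu (T f).
Proof. by case: HT => + _ _ _; apply. Qed.

Lemma bounded_op_linear (a : R[i]) f g : L2 mu f -> L2 mu g ->
  ae_eq (T (fun x => a * f x + g x)) (fun x => a * T f x + T g x).
Proof. by case: HT => _ + _ _; apply. Qed.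

Lemma bounded_op0 : ae_eq (T (fun _ => 0)) (fun _ => 0).
Proof.
have := bounded_op_linear (-1) (L2_0 mu) (L2_0 mu).
rewrite (_ : (fun _ => -1 * 0 + 0) = fun _ => 0); last first.
  by apply/funext => x; rewrite mulr0 addr0.
by apply: filterS => x ->; rewrite mulN1r addNr.
Qed.

Lemma bounded_op_scale (a : R[i]) f : L2 mu f ->
  ae_eq (T (fun x => a * f x)) (fun x => a * T f x).
Proof.
move=> hf; have := bounded_op_linear a hf (L2_0 mu).
rewrite (_ : (fun x => a * f x + 0) = fun x => a * f x); last first.
  by apply/funext => x; rewrite addr0.
by move: bounded_op0; apply: filterS2 => x T0x ->; rewrite T0x addr0.
Qed.

Lemma bounded_op_split (U : set M) f : measurable (U : set B) -> L2 mu f ->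
  ae_eq (T f) (fun x => T (mul_ind U f) x + T (mul_ind (~` U) f) x).
Proof.
move=> mU hf.
have := bounded_op_linear 1 (L2_mul_ind mU hf) (L2_mul_ind (measurableC mU) hf).
rewrite (_ : (fun x => 1 * mul_ind U f x + mul_ind (~` U) f x) = f).
  by apply: filterS => x ->; rewrite mul1r.
apply/funext => x; rewrite /mul_ind !indicE in_setC mul1r.
by case: (x \in U) => /=; rewrite ?mul1r ?mul0r ?addr0 ?add0r.
Qed.

Section LocalBound.
Variables (A : set M) (s : R).
Hypotheses (mA : measurable (A : set B)) (s_ge0 : 0 <= s).
Hypothesis opnorm_le : forall g, L2 mu g -> (norm2 mu g <= 1)%E ->
  (norm2 mu (mul_ind A (T g)) <= s%:E)%E.

Lemma sqnorm2_mul_ind_le_scaled g (t : R) : L2 mu g -> 0 < t ->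
  fine (sqnorm2 mu g) <= t ^+ 2 ->
  fine (sqnorm2 mu (mul_ind A (T g))) <= s ^+ 2 * t ^+ 2.
Proof.
move=> hg t0 gt.
pose a : R[i] := Complex t^-1 0.
have ha : sqnormC a = t^-1 ^+ 2 by rewrite sqnormC_real.
have hag : L2 mu (fun x => a * g x) by apply: L2_scale.
have hATg : L2 mu (mul_ind A (T g)) by apply/L2_mul_ind/bounded_op_L2.
have hATag : L2 mu (mul_ind A (T (fun x => a * g x))).
  by apply/L2_mul_ind/bounded_op_L2.
have eATag : fine (sqnorm2 mu (mul_ind A (T (fun x => a * g x)))) =
    t^-1 ^+ 2 * fine (sqnorm2 mu (mul_ind A (T g))).
  rewrite -ha -fine_sqnorm2_scale //; congr fine; apply: sqnorm2_ae_eq.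
  - exact: L2_measurable_ReIm hATag.
  - exact: measurable_ReIm_scale (L2_measurable_ReIm hATg).
  by apply: filterS (bounded_op_scale a hg) => x Tax; rewrite /mul_ind Tax mulrCA.
have := opnorm_le hag; rewrite !L2_norm2_le ?ler01 //.
rewrite eATag fine_sqnorm2_scale // ha expr1n !exprVn.
by rewrite !ler_pdivrMl ?exprn_gt0 // mulr1 [s ^+ 2 * _]mulrC; apply.
Qed.

Lemma sqnorm2_mul_ind_le g : L2 mu g ->
  (sqnorm2 mu (mul_ind A (T g)) <= (s ^+ 2)%:E * sqnorm2 mu g)%E.
Proof.
move=> hg; have hATg : L2 mu (mul_ind A (T g)) by apply/L2_mul_ind/bounded_op_L2.
rewrite (L2_sqnorm2E hATg) (L2_sqnorm2E hg) -EFinM lee_fin.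
(* [g] may have norm [0], so normalize it by [sqrt (||g||^2 + eps)] instead. *)
set c := fine (sqnorm2 mu g).
have c0 : 0 <= c by apply/fine_ge0/sqnorm2_ge0.
apply/ler_addgt0Pr => e e0.
have s21 : 0 < s ^+ 2 + 1 by rewrite ltr_wpDl // sqr_ge0.
pose eps := e / (s ^+ 2 + 1).
have eps0 : 0 < eps by rewrite divr_gt0.
have t0 : 0 < Num.sqrt (c + eps) by rewrite sqrtr_gt0; lra.
have := sqnorm2_mul_ind_le_scaled hg t0; rewrite sqr_sqrtr; last lra.
have ceps : c <= c + eps by lra.
move=> /(_ ceps) /le_trans; apply.
rewrite mulrDr lerD2l /eps mulrCA ger_pMr // ler_pdivrMr // mul1r; lra.
Qed.

End LocalBound.

End BoundedOperator.

Section ControlledOperator.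
Variables (R : realType) (M : metricType R) (x0 : M).
Variable mu : {measure set (Borel x0) -> \bar R}.
Local Notation B := (Borel x0).
Variable T : (B -> R[i]) -> (B -> R[i]).
Hypotheses (HT : bounded_op mu T) (HTc : controlled mu T).
Local Notation d := (prop_d mu T).
Implicit Types (f g : B -> R[i]).

Lemma prop_d_ge0 : 0 <= d.
Proof.
case: HTc => r [r0 hr]; apply: lb_le_inf; first by exists r.
by move=> y [y0 _]; apply: ltW.
Qed.

(* [dist_gt F G d] is a strict inequality, so it already holds for some
   r > d that controls [T]. *)
Lemma controlled_by_prop_d : controlled_by mu T d.
Proof.
move=> F G cF cG [s [ds hs]] f hf.
case: HTc => r0 [r00 hr0].
have [r [_ hr] rs] := @inf_lt _ [set r : R | 0 < r /\ controlled_by mu T r] s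
  (ex_intro _ r0 (conj r00 hr0)) ds.
by apply: hr => //; exists s; split.
Qed.

Lemma sqnorm2_cball_T_local (z : M) (e : R) f : 0 < e -> L2 mu f ->
  sqnorm2 mu (mul_ind (cball z 1) (T f)) =
  sqnorm2 mu (mul_ind (cball z 1) (T (mul_ind (ball z (d + 1 + e)) f))).
Proof.
move=> e0 hf; set U := ball z (d + 1 + e).
have mU : measurable (U : set B) by apply: ball_measurable.
have far : Defs.ae_eq mu (mul_ind (cball z 1) (T (mul_ind (~` U) f))) (fun _ => 0).
  apply: controlled_by_prop_d => //.
  - exact: cball_closed.
  - exact/open_closedC/metric_ball_open.
  exists (d + e); split; first by rewrite ltrDl.
  move=> x y; rewrite /cball /U /= ballEmdist /= => zx zy.
  have {}zy : d + 1 + e <= mdist z y by rewrite leNgt; apply/negP.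
  have := metric_triangle z x y; lra.
apply: sqnorm2_ae_eq.
- exact: L2_measurable_ReIm (L2_mul_ind (cball_measurable _ _) (bounded_op_L2 HT hf)).
- have hTUf := bounded_op_L2 HT (L2_mul_ind mU hf).
  exact: L2_measurable_ReIm (L2_mul_ind (cball_measurable _ _) hTUf).
move: (bounded_op_split HT mU hf) far.
apply: filterS2 => x; rewrite /mul_ind => -> farx.
by rewrite mulrDr farx addr0.
Qed.

Lemma sqnorm2_cball_T_le (s : R) (z : M) f : 0 <= s ->
  (forall g, L2 mu g -> (norm2 mu g <= 1)%E ->
     (norm2 mu (mul_ind (cball z 1) (T g)) <= s%:E)%E) ->
  L2 mu f ->
  (sqnorm2 mu (mul_ind (cball z 1) (T f)) <=
   (s ^+ 2)%:E * sqnorm2 mu (mul_ind (cball z (d + 1)) f))%E.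
Proof.
move=> s0 hs hf.
have cv := cvgeZl (y := (s ^+ 2)%:E) (fin_numE _)
  (sqnorm2_mul_ind_ball_cvg (z := z) (r := d + 1) hf).
rewrite -(cvg_lim (@ereal_hausdorff R) cv).
apply: lime_ge; first by apply/cvg_ex; eexists; exact: cv.
apply: nearW => n.
rewrite (sqnorm2_cball_T_local (e := n.+1%:R^-1) z _ hf) ?invr_gt0 //.
apply: (sqnorm2_mul_ind_le HT (cball_measurable _ _) s0 hs).
by apply: L2_mul_ind => //; apply: ball_measurable.
Qed.

End ControlledOperator.

Lemma exists_uniq_enum (U : choiceType) (P : U -> Prop) (K : nat) :
  (forall s : seq U, uniq s -> (forall z, z \in s -> P z) -> (size s <= K)%N) ->
  exists s : seq U, uniq s /\ (forall z, z \in s <-> P z).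
Proof.
move=> hK.
pose Q k := `[< exists s : seq U, [/\ uniq s, (forall z, z \in s -> P z) & size s = k] >].
have Q0 : exists k, Q k by exists 0%N; apply/asboolP; exists [::].
have Q_le k : Q k -> (k <= K)%N by move=> /asboolP [s [us hs <-]]; apply: hK.
have [k /asboolP [s [us hs sk]] kmax] := ex_maxnP Q0 Q_le.
exists s; split => // z; split; first exact: hs.
move=> Pz; apply/negPn/negP => zs.
suff /kmax : Q k.+1 by rewrite ltnn.
apply/asboolP; exists (z :: s); split; rewrite /= ?zs ?sk //.
by move=> w; rewrite inE => /orP [/eqP -> | /hs].
Qed.

Section Covering.
Variables (R : realType) (M : metricType R) (x0 : M).
Variable mu : {measure set (Borel x0) -> \bar R}.
Local Notation B := (Borel x0).
Variables (Z : set M) (N : R -> nat).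
Hypothesis Hcover : forall x : M, exists2 z, Z z & cball z 1 x.
Hypothesis HN : forall (x : M) (r : R), 1 <= r ->
  forall s : seq M, uniq s ->
    (forall z, z \in s -> Z z /\ (cball z r `&` cball x r) !=set0) ->
    (size s <= N r)%N.
Implicit Types (f g h : B -> R[i]) (L : seq M).

Lemma N_gt0 (r : R) : 1 <= r -> (0 < N r)%N.
Proof.
move=> r1; have [z Zz zx0] := Hcover x0.
have /= := HN (x := x0) r1 (s := [:: z]); apply => // w.
rewrite inE => /eqP ->; split => //.
exists x0; rewrite /cball /= mdistxx in zx0 *; split; lra.
Qed.

Lemma sqnormC_cball_le_sum (c : M) (r : R) L h (y : B) : uniq L ->
  (forall z, Z z -> mdist c z <= r + 1 -> z \in L) ->
  sqnormC (mul_ind (cball c r) h y) <= \sum_(z <- L) sqnormC (mul_ind (cball z 1) h y).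
Proof.
move=> uL hL; have sum_ge0 : 0 <= \sum_(z <- L) sqnormC (mul_ind (cball z 1) h y).
  by apply: sumr_ge0 => z _; apply: sqnormC_ge0.
rewrite sqnormC_mul_ind indicE; case: (boolP (y \in _)); last by rewrite mul0r.
rewrite inE /cball /= => cy; have [z Zz zy] := Hcover y.
have zL : z \in L.
  apply: hL => //; have := metric_triangle c y z; rewrite (metric_sym y z).
  by rewrite /cball /= in zy; lra.
rewrite (bigD1_seq z) //= sqnormC_mul_ind indicE mem_set // lerDl.
by apply: sumr_ge0 => i _; apply: sqnormC_ge0.
Qed.

Lemma sum_sqnormC_cball_le (D : R) L h (y : B) : 1 <= D -> uniq L ->
  (forall z, z \in L -> Z z) ->
  \sum_(z <- L) sqnormC (mul_ind (cball z D) h y) <= (N D)%:R * sqnormC (h y).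
Proof.
move=> D1 uL LZ.
under eq_bigr do rewrite sqnormC_mul_ind.
rewrite -mulr_suml ler_wpM2r ?sqnormC_ge0 //.
pose near_y z := `[< cball z D y >].
have -> : \sum_(z <- L) (\1_(cball z D) y : R) = (count near_y L)%:R.
  rewrite -sumn_count sumnE big_map natr_sum; apply: eq_bigr => z _.
  rewrite indicE /near_y; case: (boolP `[< _ >]) => /asboolP zy.
    by rewrite mem_set.
  by rewrite memNset.
rewrite ler_nat -size_filter; apply: (HN (x := y) D1); first exact: filter_uniq.
move=> z; rewrite mem_filter => /andP [/asboolP zy zL]; split; first exact: LZ.
by exists y; split => //; rewrite /cball /= mdistxx; lra.
Qed.

Lemma sqnorm2_cball_le_sum (r : R) L g : uniq L ->
  (forall z, Z z -> mdist x0 z <= r + 1 -> z \in L) -> measurable_ReIm g ->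
  (sqnorm2 mu (mul_ind (cball x0 r) g) <=
   \sum_(z <- L) sqnorm2 mu (mul_ind (cball z 1) g))%E.
Proof.
move=> uL hL mg; rewrite /sqnorm2 -ge0_integral_sum //; last first.
- by move=> z x _; apply: sqmod_ge0.
- move=> z; apply: measurable_sqmod.
  exact: measurable_ReIm_mul_ind (cball_measurable _ _) mg.
apply: ge0_le_integral => //.
- by move=> x _; apply: sqmod_ge0.
- apply: measurable_sqmod.
  exact: measurable_ReIm_mul_ind (cball_measurable _ _) mg.
- apply: emeasurable_sum => z; apply: measurable_sqmod.
  exact: measurable_ReIm_mul_ind (cball_measurable _ _) mg.
by move=> x _; rewrite /sqmod sumEFin lee_fin; apply: sqnormC_cball_le_sum.
Qed.

Lemma sum_sqnorm2_cball_le (D : R) L f : 1 <= D -> uniq L ->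
  (forall z, z \in L -> Z z) -> measurable_ReIm f ->
  (\sum_(z <- L) sqnorm2 mu (mul_ind (cball z D) f) <= (N D)%:R%:E * sqnorm2 mu f)%E.
Proof.
move=> D1 uL LZ mf; rewrite /sqnorm2 -ge0_integral_sum //; last first.
- by move=> z x _; apply: sqmod_ge0.
- move=> z; apply: measurable_sqmod.
  exact: measurable_ReIm_mul_ind (cball_measurable _ _) mf.
rewrite -ge0_integralZl_EFin //; last first.
- exact: measurable_sqmod.
- by move=> x _; apply: sqmod_ge0.
apply: ge0_le_integral => //.
- move=> x _; rewrite sumEFin lee_fin.
  by apply: sumr_ge0 => z _; apply: sqnormC_ge0.
- apply: emeasurable_sum => z; apply: measurable_sqmod.
  exact: measurable_ReIm_mul_ind (cball_measurable _ _) mf.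
- by apply: measurable_funeM; apply: measurable_sqmod.
by move=> x _; rewrite /sqmod sumEFin -EFinM lee_fin; apply: sum_sqnormC_cball_le.
Qed.

Lemma sqnorm2_cball_le_of_local (K D : R) f g (n : nat) :
  0 <= K -> 1 <= D -> L2 mu f -> L2 mu g ->
  (forall z, sqnorm2 mu (mul_ind (cball z 1) g) <=
             K%:E * sqnorm2 mu (mul_ind (cball z D) f))%E ->
  (sqnorm2 mu (mul_ind (cball x0 n%:R) g) <= (K * (N D)%:R)%:E * sqnorm2 mu f)%E.
Proof.
move=> K0 D1 hf hg hloc.
have [L [uL hL]] : exists L, uniq L /\
    (forall z, z \in L <-> Z z /\ mdist x0 z <= n%:R + 1).
  apply: (exists_uniq_enum (K := N (n%:R + 1))) => s us hs.
  apply: (HN (x := x0) (r := n%:R + 1)) => //; first by rewrite lerDr.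
  move=> z /hs [Zz zx0]; split => //; exists z; split => //.
  by rewrite /cball /= mdistxx ler_wpDl.
have hL' z : Z z -> mdist x0 z <= n%:R + 1 -> z \in L by move=> Zz zx0; apply/hL.
apply: le_trans (sqnorm2_cball_le_sum uL hL' (L2_measurable_ReIm hg)) _.
apply: (@le_trans _ _ (\sum_(z <- L) K%:E * sqnorm2 mu (mul_ind (cball z D) f))%E).
  by apply: lee_sum => z _; apply: hloc.
rewrite -ge0_sume_distrr; last by move=> z _; apply: sqnorm2_ge0.
rewrite EFinM -muleA; apply: lee_wpmul2l; first by rewrite lee_fin.
by apply: sum_sqnorm2_cball_le (L2_measurable_ReIm hf) => // z /hL [].
Qed.

End Covering.

Theorem lemma3p6 (R : realType) (M : metricType R) (x0 : M)
  (mu : {measure set (Borel x0) -> \bar R})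
  (Hproper : proper_space M)
  (Hnoncompact : ~ compact [set: M])
  (Hradon : radon mu)
  (Hsupp : full_support mu)
  (Hpos : forall (x : M) (r : R), 0 < r -> (0 < mu (cball x r))%E)
  (Hsupfin : forall r : R, 0 < r ->
     (ereal_sup [set mu (cball x r) | x in [set: M]] < +oo)%E)
  (Hinf : (0 < ereal_inf [set mu (cball x (1 / 2)) | x in [set: M]])%E)
  (Z : set M) (N : R -> nat)
  (Hcover : forall x : M, exists2 z, Z z & cball z 1 x)
  (HN : forall (x : M) (r : R), 1 <= r ->
     forall s : seq M, uniq s ->
       (forall z, z \in s -> Z z /\ (cball z r `&` cball x r) !=set0) ->
       (size s <= N r)%N)
  (T : (Borel x0 -> R[i]) -> (Borel x0 -> R[i]))
  (HT : bounded_op mu T) (HTc : controlled mu T) :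
  (opnorm mu T <=
     (Num.sqrt (N (prop_d mu T + 1))%:R)%:E *
     ereal_sup [set opnorm mu (fun f => mul_ind (cball x 1) (T f)) | x in [set: M]])%E.
Proof.
set D := prop_d mu T + 1; set S := ereal_sup _.
have D1 : 1 <= D by rewrite lerDr prop_d_ge0.
have S0 : (0 <= S)%E.
  by apply: le_trans (opnorm_ge0 _ _) (ereal_sup_ubound _); exists x0.
case hS : S => [s| |]; last by move: S0; rewrite hS.
  2: by rewrite mulry gtr0_sg ?mul1e ?leey // sqrtr_gt0 ltr0n (N_gt0 x0 Hcover HN D1).
have s0 : 0 <= s by rewrite -lee_fin -hS.
have hloc z g : L2 mu g -> (norm2 mu g <= 1)%E ->
    (norm2 mu (mul_ind (cball z 1) (T g)) <= s%:E)%E.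
  move=> hg g1; rewrite -hS.
  apply: (@le_trans _ _ (opnorm mu (fun f => mul_ind (cball z 1) (T f)))).
    by apply: ereal_sup_ubound; exists g.
  by apply: ereal_sup_ubound; exists z.
apply/ereal_supP => _ [f [hf f1] <-].
have hTf := bounded_op_L2 HT hf.
have hTf_le : (sqnorm2 mu (T f) <= (s ^+ 2 * (N D)%:R)%:E * sqnorm2 mu f)%E.
  apply: sqnorm2_le_of_cball (L2_measurable_ReIm hTf) _ => n.
  apply: (sqnorm2_cball_le_of_local Hcover HN n _ D1 hf hTf) => [|z].
    exact: sqr_ge0.
  exact (sqnorm2_cball_T_le HT HTc s0 (hloc z) hf).
rewrite -EFinM L2_norm2_le ?mulr_ge0 ?sqrtr_ge0 // exprMn sqr_sqrtr // mulrC.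
move: f1 hTf_le; rewrite L2_norm2_le ?ler01 // expr1n.
rewrite (L2_sqnorm2E hTf) (L2_sqnorm2E hf) -EFinM lee_fin => f1 /le_trans; apply.
by rewrite ler_piMr // mulr_ge0 ?sqr_ge0.
Qed.
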